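(* Let $M\ge 2$ be an integer, $\kappa\ge 0$, $\beta>0$, $\phi\in[0,2\pi]$ and $\bm{\psi}=(\psi_1,\dots,\psi_{M-1})\in[0,2\pi]^{M-1}$ be fixed (deterministic), and let $\mathbf{R}\in\mathbb{R}^{M\times M}$ be a real symmetric positive semidefinite matrix with $R_{\scriptscriptstyle\sum}:=\mathbf{1}^T\mathbf{R}\,\mathbf{1}>0$. For $t\in\{1,\dots,M-1\}$ put $\Phi_t=-t\pi\sin\phi$, and define the vectors $\bm{\omega}_x,\bm{\omega}_y\in\mathbb{R}^M$ by $$\bm{\omega}_{x}=\big[1,\ \cos(\Phi_1+\psi_1)-\sin(\Phi_1+\psi_1),\ \dots,\ \cos(\Phi_{M-1}+\psi_{M-1})-\sin(\Phi_{M-1}+\psi_{M-1})\big]^T,$$ $$\bm{\omega}_{y}=\big[1,\ \cos(\Phi_1+\psi_1)+\sin(\Phi_1+\psi_1),\ \dots,\ \cos(\Phi_{M-1}+\psi_{M-1})+\sin(\Phi_{M-1}+\psi_{M-1})\big]^T.$$ Let $\mathbf{h}_x,\mathbf{h}_y$ be independent real Gaussian random vectors with $\mathbf{h}_x\sim\mathcal{N}\big(\sqrt{\tfrac{\kappa}{2(\kappa+1)}}\,\bm{\omega}_x,\ \tfrac{1}{2(\kappa+1)}\mathbf{R}\big)$ and $\mathbf{h}_y\sim\mathcal{N}\big(\sqrt{\tfrac{\kappa}{2(\kappa+1)}}\,\bm{\omega}_y,\ \tfrac{1}{2(\kappa+1)}\mathbf{R}\big)$, and let $\mathbf{h}^*=\mathbf{h}_x+\mathbbm{i}\,\mathbf{h}_y\in\mathbb{C}^M$.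 Define the random variable $$\xi^{\mathrm{rf}}_{\mathrm{aa-ss}}=\frac{\beta}{M}\big|\mathbf{1}^T\mathbf{h}^*\big|^2 .$$ Then $$\xi^{\mathrm{rf}}_{\mathrm{aa-ss}}\sim \frac{\beta R_{\scriptscriptstyle\sum}}{2(\kappa+1)M}\,\chi^2\Big(2,\ \frac{2\kappa f(\bm{\psi},\phi)}{R_{\scriptscriptstyle\sum}}\Big),$$ where $f(\bm{\psi},\phi)=\upsilon_1(\bm{\psi},\phi)^2+\upsilon_2(\bm{\psi},\phi)^2$ with $$\upsilon_1(\bm{\psi},\phi)=1+\sum_{t=1}^{M-1}\cos(\psi_t+\Phi_t),\qquad \upsilon_2(\bm{\psi},\phi)=\sum_{t=1}^{M-1}\sin(\psi_t+\Phi_t).$$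
   Context: $\mathbf{1}$ denotes the all-ones vector of length $M$ and $\mathbbm{i}=\sqrt{-1}$. $\mathcal{N}(\bm{\mu},\mathbf{C})$ denotes a real Gaussian random vector with mean $\bm{\mu}$ and covariance matrix $\mathbf{C}$. $\chi^2(m,n)$ denotes a non-central chi-squared random variable with $m$ degrees of freedom and non-centrality parameter $n$ (i.e. the distribution of $\sum_{k=1}^m Z_k^2$ with $Z_k$ independent, $Z_k\sim\mathcal{N}(\mu_k,1)$ and $\sum_k\mu_k^2=n$), and $X\sim c\,\chi^2(m,n)$ means $X$ has the distribution of $c$ times such a variable. Interpretation (not needed for the statement): $\mathbf{h}^*$ is the phase-adjusted Rician-fading channel vector from an $M$-antenna power beacon (half-wavelength uniform linear array, azimuth angle $\phi$, preventive phase shifts $\psi_t$, Rician factor $\kappa$, spatial correlation $\mathbf{R}$) to a single-antenna receiver, and $\xi^{\mathrm{rf}}_{\mathrm{aa-ss}}$ is the incident RF power when all antennas transmit the same signal with equal power $\beta/M$. *)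

From HB Require Import structures.
From mathcomp Require Import all_boot all_order all_algebra.
From mathcomp Require Import all_classical all_reals all_analysis.
Set Implicit Arguments. Unset Strict Implicit. Unset Printing Implicit Defensive.
Import Order.TTheory GRing.Theory Num.Theory.
Local Open Scope classical_set_scope.
Local Open Scope ring_scope.

(* Real Gaussian law N(m, v) with variance v >= 0; v = 0 is the degenerate
   (Dirac) Gaussian.  normal_prob takes the standard deviation. *)
Definition is_normal {R : realType} (d : measure_display) (T : measurableType d)
  (P : probability T R) (X : T -> R) (m v : R) : Prop :=
  measurable_fun setT X /\
  forall B : set R, measurable B ->
    P (X @^-1` B) = (if v == 0 then \d_m B else normal_prob m (Num.sqrt v) B).

Definition is_gaussian_vector {R : realType} (d : measure_display)
  (T : measurableType d) (P : probability T R) (n : nat)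
  (X : 'I_n -> T -> R) (mu : 'I_n -> R) (C : 'M[R]_n) : Prop :=
  forall a : 'I_n -> R,
    is_normal P (fun w => \sum_i a i * X i w) (\sum_i a i * mu i)
      (\sum_i \sum_j a i * C i j * a j).

(* Independence of the random vectors X and Y (independence of the
   sigma-algebras they generate, tested on the generating pi-system of
   measurable rectangles). *)
Definition indep_vectors {R : realType} (d : measure_display)
  (T : measurableType d) (P : probability T R) (n k : nat)
  (X : 'I_n -> T -> R) (Y : 'I_k -> T -> R) : Prop :=
  forall (A : 'I_n -> set R) (B : 'I_k -> set R),
    (forall i, measurable (A i)) -> (forall j, measurable (B j)) ->
    P ([set w | forall i, A i (X i w)] `&` [set w | forall j, B j (Y j w)]) =
    (P [set w | forall i, A i (X i w)] * P [set w | forall j, B j (Y j w)])%E.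

Definition mutually_indep {R : realType} (d : measure_display)
  (T : measurableType d) (P : probability T R) (m : nat)
  (Z : 'I_m -> T -> R) : Prop :=
  forall A : 'I_m -> set R, (forall i, measurable (A i)) ->
    P [set w | forall i, A i (Z i w)] = (\big[mule/1%E]_i P (Z i @^-1` A i))%E.

Definition has_scaled_ncchi2_law {R : realType} (d : measure_display)
  (T : measurableType d) (P : probability T R) (X : T -> R)
  (c : R) (m : nat) (n : R) : Prop :=
  exists (d' : measure_display) (T' : measurableType d') (Q : probability T' R)
         (Z : 'I_m -> T' -> R) (mu : 'I_m -> R),
    [/\ mutually_indep Q Z,
        (forall k, is_normal Q (Z k) (mu k) 1),
        \sum_k mu k ^+ 2 = n &
        forall B : set R, measurable B ->
          P (X @^-1` B) = Q ((fun w => c * \sum_k Z k w ^+ 2) @^-1` B)].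

Definition Phi {R : realType} (phi : R) (t : nat) : R := - (t%:R * pi * sin phi).

Definition omega_x {R : realType} (M : nat) (phi : R) (psi : nat -> R) (i : 'I_M) : R :=
  if (i : nat) == 0%N then 1
  else cos (Phi phi i + psi i) - sin (Phi phi i + psi i).

Definition omega_y {R : realType} (M : nat) (phi : R) (psi : nat -> R) (i : 'I_M) : R :=
  if (i : nat) == 0%N then 1
  else cos (Phi phi i + psi i) + sin (Phi phi i + psi i).

Definition upsilon1 {R : realType} (M : nat) (psi : nat -> R) (phi : R) : R :=
  1 + \sum_(1 <= t < M) cos (psi t + Phi phi t).

Definition upsilon2 {R : realType} (M : nat) (psi : nat -> R) (phi : R) : R :=
  \sum_(1 <= t < M) sin (psi t + Phi phi t).

Definition f_psi_phi {R : realType} (M : nat) (psi : nat -> R) (phi : R) : R :=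
  upsilon1 M psi phi ^+ 2 + upsilon2 M psi phi ^+ 2.

Definition Rsum {R : realType} (M : nat) (Rm : 'M[R]_M) : R :=
  \sum_i \sum_j Rm i j.

(* xi = beta/M * |1^T (hx + i hy)|^2 = beta/M * ((sum hx)^2 + (sum hy)^2) *)
Definition xi_aa_ss {R : realType} (T : Type) (M : nat) (beta : R)
  (hx hy : 'I_M -> T -> R) (w : T) : R :=
  beta / M%:R * ((\sum_i hx i w) ^+ 2 + (\sum_i hy i w) ^+ 2).

From HB Require Import structures.
From mathcomp Require Import all_boot all_order all_algebra.
From mathcomp Require Import all_classical all_reals all_analysis.
From mathcomp Require Import ring.
Import Order.TTheory GRing.Theory Num.Theory.
Local Open Scope classical_set_scope.
Local Open Scope ring_scope.

(* The sums S_x = 1^T h_x and S_y = 1^T h_y are real Gaussians with means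
   proportional to upsilon1 -+ upsilon2 and the common variance
   R_sum / (2 (kappa + 1)) =: s^2; they are independent because h_x and h_y
   are.  Hence xi = (beta s^2 / M) ((S_x / s)^2 + (S_y / s)^2) is a scaled
   chi^2 with two degrees of freedom, whose non-centrality is
   kappa ((upsilon1 - upsilon2)^2 + (upsilon1 + upsilon2)^2) / R_sum
   = 2 kappa f / R_sum. *)

Definition indep2 {R : realType} {d : measure_display} {T : measurableType d}
    (P : probability T R) (U V : T -> R) : Prop :=
  forall A B : set R, measurable A -> measurable B ->
    P (U @^-1` A `&` V @^-1` B) = (P (U @^-1` A) * P (V @^-1` B))%E.

Section rectangles.
Context {R : realType} {d : measure_display} {T : measurableType d} {n : nat}.
Variables (P : probability T R) (X : 'I_n -> T -> R).
Hypothesis mX : forall i, measurable_fun setT (X i).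

Definition rectangles : set (set T) :=
  [set E | exists A : 'I_n -> set R, (forall i, measurable (A i)) /\
     E = [set w | forall i, A i (X i w)]].

Lemma rectangles_setI_closed : setI_closed rectangles.
Proof.
move=> _ _ [A [mA ->]] [B [mB ->]].
exists (fun i => A i `&` B i); split; first by move=> i; exact: measurableI.
apply/seteqP; split=> w /=; first by move=> [wA wB] i; split.
by move=> wAB; split=> i; case: (wAB i).
Qed.

Lemma rectangles_setT : rectangles setT.
Proof. by exists (fun=> setT); split=> //; apply/seteqP; split. Qed.

Lemma rectangles_measurable : rectangles `<=` measurable.
Proof.
move=> _ [A [mA ->]].
have -> : [set w | forall i, A i (X i w)] =
    \bigcap_(i in [set: 'I_n]) (X i @^-1` A i).
  by apply/seteqP; split=> w /= wA i; [move=> _; exact: wA | exact: (wA i I)].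
apply: (fin_bigcap_measurable finite_finset) => i _.
by rewrite -[X in measurable X]setTI; exact: mX.
Qed.

(* E |-> P (E `&` F) and E |-> P F * P E are finite measures agreeing on the
   pi-system of rectangles, hence on the sigma-algebra it generates. *)
Lemma indep_sigma_rectangles (F : set T) : measurable F ->
  (forall E, rectangles E -> P (E `&` F) = (P E * P F)%E) ->
  forall E, <<s rectangles >> E -> P (E `&` F) = (P E * P F)%E.
Proof.
move=> mF indepF.
have PF_fin : P F = (fine (P F))%:E by rewrite fineK // fin_num_measure.
pose r : {nonneg R} := NngNum (fine_ge0 (measure_ge0 P F)).
have agree := @g_sigma_algebra_measure_unique d R T rectangles
  rectangles_measurable (fun=> setT) (fun=> rectangles_setT) _
  (mrestr P mF) (mscale r P) rectangles_setI_closed.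
move=> E sE; rewrite muleC PF_fin.
apply: (agree _ _ _ E sE).
- by apply/seteqP; split=> // w _; exists 0%N.
- by move=> A rA; rewrite /= /mrestr indepF // muleC PF_fin.
- move=> k; rewrite /= /mrestr setTI.
  by rewrite (le_lt_trans (probability_le1 _ mF)) // ltey.
Qed.

Lemma sigma_rectangles_measurable : <<s rectangles >> `<=` measurable.
Proof.
apply: smallest_sub; first exact: sigma_algebra_measurable.
exact: rectangles_measurable.
Qed.

Lemma sigma_rectangles_lincomb (a : 'I_n -> R) {B : set R} : measurable B ->
  <<s rectangles >> ((fun w => \sum_i a i * X i w) @^-1` B).
Proof.
move=> mB; pose Tg := g_sigma_algebraType rectangles.
have mXg i : measurable_fun (setT : set Tg) (X i : Tg -> R).
  move=> _ C mC; rewrite setTI; apply: sub_sigma_algebra.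
  exists (fun j => if j == i then C else setT); split.
    by move=> j; case: ifP.
  apply/seteqP; split=> w /=; last by move/(_ i); rewrite eqxx.
  by move=> Cw j; case: ifP => // /eqP ->.
have maX i : measurable_fun (setT : set Tg) (fun w : Tg => a i * X i w).
  exact: (measurable_realfun.measurable_funM (measurable_cst (a i)) (mXg i)).
have := @measurable_sum _ Tg R setT _ (index_enum 'I_n) _ maX measurableT B mB.
by rewrite setTI.
Qed.

End rectangles.

Lemma indep_vectors_sigma {R : realType} {d : measure_display}
    {T : measurableType d} {P : probability T R} {n k : nat}
    {X : 'I_n -> T -> R} {Y : 'I_k -> T -> R} :
  (forall i, measurable_fun setT (X i)) -> (forall j, measurable_fun setT (Y j)) ->
  indep_vectors P X Y ->
  forall E F, <<s rectangles X >> E -> <<s rectangles Y >> F ->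
    P (E `&` F) = (P E * P F)%E.
Proof.
move=> mX mY indepXY E F sE sF.
have indep_rectY G : rectangles Y G -> forall E', <<s rectangles X >> E' ->
    P (E' `&` G) = (P E' * P G)%E.
  move=> rG; apply: (indep_sigma_rectangles P X mX); first exact: rectangles_measurable rG.
  by move=> _ [A [mA ->]]; case: rG => B [mB ->]; exact: indepXY.
rewrite setIC muleC; apply: (indep_sigma_rectangles P Y mY) => //.
  exact: sigma_rectangles_measurable sE.
by move=> G rG; rewrite setIC muleC; exact: indep_rectY.
Qed.

Lemma indep_vectors_lincomb {R : realType} {d : measure_display}
    {T : measurableType d} {P : probability T R} {n k : nat}
    {X : 'I_n -> T -> R} {Y : 'I_k -> T -> R} (a : 'I_n -> R) (b : 'I_k -> R) :
  (forall i, measurable_fun setT (X i)) -> (forall j, measurable_fun setT (Y j)) ->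
  indep_vectors P X Y ->
  indep2 P (fun w => \sum_i a i * X i w) (fun w => \sum_j b j * Y j w).
Proof.
move=> mX mY indepXY A B mA mB.
exact: (indep_vectors_sigma mX mY indepXY _ _
  (sigma_rectangles_lincomb X a mA) (sigma_rectangles_lincomb Y b mB)).
Qed.

Lemma gaussian_vector_measurable {R : realType} {d : measure_display}
    {T : measurableType d} {P : probability T R} {n : nat}
    {X : 'I_n -> T -> R} {mu : 'I_n -> R} {C : 'M[R]_n} :
  is_gaussian_vector P X mu C -> forall i, measurable_fun setT (X i).
Proof.
move=> gX i; have [+ _] := gX (fun j => (j == i)%:R).
congr measurable_fun; apply/funext => w.
rewrite (bigD1 i) //= eqxx mul1r big1 ?addr0 // => j /negbTE ->.
by rewrite mul0r.
Qed.

Lemma Rsum_scale {R : realType} {n : nat} (k : R) (C : 'M[R]_n) :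
  Rsum (k *: C) = k * Rsum C.
Proof.
rewrite /Rsum mulr_sumr; apply: eq_bigr => i _; rewrite mulr_sumr.
by apply: eq_bigr => j _; rewrite mxE.
Qed.

Lemma gaussian_vector_scaled_sum {R : realType} {d : measure_display}
    {T : measurableType d} {P : probability T R} {n : nat}
    {X : 'I_n -> T -> R} {mu : 'I_n -> R} {C : 'M[R]_n} (c : R) :
  is_gaussian_vector P X mu C ->
  is_normal P (fun w => \sum_i c * X i w) (c * \sum_i mu i) (c ^+ 2 * Rsum C).
Proof.
move=> gX; have := gX (fun=> c); rewrite -mulr_sumr.
suff -> : \sum_i \sum_j c * C i j * c = c ^+ 2 * Rsum C by [].
rewrite /Rsum mulr_sumr; apply: eq_bigr => i _; rewrite mulr_sumr.
by apply: eq_bigr => j _; rewrite expr2 mulrAC.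
Qed.

Lemma scaled_ncchi2_law_indep_normal2 {R : realType} {d : measure_display}
    {T : measurableType d} {P : probability T R} {X Z0 Z1 : T -> R}
    {m0 m1 c : R} :
  is_normal P Z0 m0 1 -> is_normal P Z1 m1 1 -> indep2 P Z0 Z1 ->
  (forall w, X w = c * (Z0 w ^+ 2 + Z1 w ^+ 2)) ->
  has_scaled_ncchi2_law P X c 2 (m0 ^+ 2 + m1 ^+ 2).
Proof.
move=> nZ0 nZ1 indepZ XE.
pose Z (k : 'I_2) := if val k == 0%N then Z0 else Z1.
pose mu (k : 'I_2) := if val k == 0%N then m0 else m1.
exists d, T, P, Z, mu; split.
- move=> A mA; rewrite !big_ord_recl big_ord0 mule1 -indepZ //.
  congr (P _); apply/seteqP; split=> w /=.
    by move=> AZ; split; [exact: (AZ ord0) | exact: (AZ (lift ord0 ord0))].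
  move=> [AZ0 AZ1] [[|[|k]] lt_k2] //.
    by rewrite (_ : Ordinal lt_k2 = ord0) //; exact: val_inj.
  by rewrite (_ : Ordinal lt_k2 = lift ord0 ord0) //; exact: val_inj.
- by move=> k; rewrite /Z /mu; case: ifP.
- by rewrite !big_ord_recl big_ord0 addr0.
- move=> B mB; congr (P _); apply: (congr1 (fun f => f @^-1` B)).
  by apply/funext => w; rewrite XE !big_ord_recl big_ord0 addr0.
Qed.

Lemma sum_omega_x {R : realType} (M : nat) (phi : R) (psi : nat -> R) :
  (1 <= M)%N ->
  \sum_(i < M) omega_x phi psi i = upsilon1 M psi phi - upsilon2 M psi phi.
Proof.
case: M => // M _; rewrite big_ord_recl /omega_x /= /upsilon1 /upsilon2.
rewrite !big_add1 /= !big_mkord -addrA -sumrB; congr (_ + _).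
by apply: eq_bigr => i _; rewrite (addrC (psi _)).
Qed.

Lemma sum_omega_y {R : realType} (M : nat) (phi : R) (psi : nat -> R) :
  (1 <= M)%N ->
  \sum_(i < M) omega_y phi psi i = upsilon1 M psi phi + upsilon2 M psi phi.
Proof.
case: M => // M _; rewrite big_ord_recl /omega_y /= /upsilon1 /upsilon2.
rewrite !big_add1 /= !big_mkord -addrA -big_split; congr (_ + _).
by apply: eq_bigr => i _; rewrite (addrC (psi _)).
Qed.

Lemma sqr_sum_omega {R : realType} (M : nat) (phi : R) (psi : nat -> R) :
  (1 <= M)%N ->
  (\sum_(i < M) omega_x phi psi i) ^+ 2 + (\sum_(i < M) omega_y phi psi i) ^+ 2 =
  2 * f_psi_phi M psi phi.
Proof.
by move=> M_ge1; rewrite sum_omega_x // sum_omega_y // /f_psi_phi; ring.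
Qed.

Theorem theorem1 (R : realType) (M : nat) (kappa beta phi : R) (psi : nat -> R)
  (Rm : 'M[R]_M) (d : measure_display) (T : measurableType d)
  (P : probability T R) (hx hy : 'I_M -> T -> R) :
  (2 <= M)%N ->
  0 <= kappa -> 0 < beta -> 0 <= phi <= pi *+ 2 ->
  (forall t, (1 <= t <= M.-1)%N -> 0 <= psi t <= pi *+ 2) ->
  Rm^T = Rm ->
  (forall v : 'cV[R]_M, 0 <= (v^T *m Rm *m v) 0 0) ->
  0 < Rsum Rm ->
  is_gaussian_vector P hx
    (fun i => Num.sqrt (kappa / (2 * (kappa + 1))) * omega_x phi psi i)
    ((2 * (kappa + 1))^-1 *: Rm) ->
  is_gaussian_vector P hy
    (fun i => Num.sqrt (kappa / (2 * (kappa + 1))) * omega_y phi psi i)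
    ((2 * (kappa + 1))^-1 *: Rm) ->
  indep_vectors P hx hy ->
  has_scaled_ncchi2_law P (xi_aa_ss beta hx hy)
    (beta * Rsum Rm / (2 * (kappa + 1) * M%:R)) 2
    (2 * kappa * f_psi_phi M psi phi / Rsum Rm).
Proof.
move=> M_ge2 kappa_ge0 _ _ _ _ _ Rsum_gt0 gx gy indep_xy.
have M_ge1 : (1 <= M)%N by exact: leq_trans M_ge2.
have kappa1_gt0 : 0 < kappa + 1 by rewrite ltr_wpDl.
set s := Num.sqrt (Rsum Rm / (2 * (kappa + 1))).
have s_gt0 : 0 < s by rewrite sqrtr_gt0 divr_gt0 ?mulr_gt0.
have s2 : s ^+ 2 = Rsum Rm / (2 * (kappa + 1)).
  by rewrite sqr_sqrtr // ltW // divr_gt0 ?mulr_gt0.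
set c0 := Num.sqrt (kappa / (2 * (kappa + 1))).
have c02 : c0 ^+ 2 = kappa / (2 * (kappa + 1)).
  by rewrite sqr_sqrtr // divr_ge0 // ltW ?mulr_gt0.
have unit_var : s^-1 ^+ 2 * Rsum ((2 * (kappa + 1))^-1 *: Rm) = 1.
  by rewrite Rsum_scale exprVn s2; field; rewrite !gt_eqF.
have nx := gaussian_vector_scaled_sum s^-1 gx; rewrite unit_var in nx.
have ny := gaussian_vector_scaled_sum s^-1 gy; rewrite unit_var in ny.
have indep := indep_vectors_lincomb (fun=> s^-1) (fun=> s^-1)
  (gaussian_vector_measurable gx) (gaussian_vector_measurable gy) indep_xy.
have -> : 2 * kappa * f_psi_phi M psi phi / Rsum Rm =
    (s^-1 * \sum_(i < M) c0 * omega_x phi psi i) ^+ 2 +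
    (s^-1 * \sum_(i < M) c0 * omega_y phi psi i) ^+ 2.
  rewrite -!mulr_sumr !mulrA !exprMn -mulrDr sqr_sum_omega // exprVn s2 c02.
  by field; rewrite !gt_eqF.
apply: (scaled_ncchi2_law_indep_normal2 nx ny indep) => w.
rewrite /xi_aa_ss -!mulr_sumr !exprMn exprVn s2.
have M_neq0 : M%:R != 0 :> R by rewrite pnatr_eq0 -lt0n.
by field; rewrite M_neq0 !gt_eqF.
Qed.
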